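(* Let $\sigma=(a_1,\ldots,a_s)$ be a partition of $r$ and let $H=H(n,r,q\mid\sigma)$ with $n\ge s$ and $q\ge r$. Suppose $d=\gcd(a_1,\ldots,a_s)\ge2$ and $q\equiv t\pmod d$ with $1\le t\le d-1$. Then every maximum matching of $H$ leaves at least $tn$ vertices unmatched. Hence $\nu(H)\le\frac{n(q-t)}{r}$.
   Context: A $\sigma$-hypergraph $H=H(n,r,q\mid\sigma)$, for a partition $\sigma=(a_1,\ldots,a_s)$ of $r$ with $s$ parts, is the $r$-uniform hypergraph whose vertex set is the disjoint union of $n$ classes $V_1,\ldots,V_n$, each of size $q$; an $r$-subset $K$ of vertices is an edge iff the multiset of non-zero values $|K\cap V_i|$ equals $\sigma$. A matching is a set of pairwise vertex-disjoint edges; $\nu(H)$ is the maximum size of a matching. *)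

From mathcomp Require Import all_boot.
Set Implicit Arguments. Unset Strict Implicit. Unset Printing Implicit Defensive.

(* Vertices of H(n,r,q|sigma): pairs (i, j) with i : 'I_n the class index
   and j : 'I_q the position inside class V_i. *)
Definition vertex (n q : nat) := ('I_n * 'I_q)%type.

Definition class_part (n q : nat) (K : {set vertex n q}) (i : 'I_n) :
  {set vertex n q} := [set v in K | v.1 == i].

(* sigma is a partition of r: positive parts summing to r (the order of
   the parts is irrelevant, since edges compare multisets). *)
Definition is_partition (r : nat) (sigma : seq nat) : bool :=
  all (fun a => 0 < a) sigma && (sumn sigma == r).

Definition gcd_seq (sigma : seq nat) : nat := foldr gcdn 0 sigma.

Definition is_edge (n r q : nat) (sigma : seq nat) (K : {set vertex n q}) : bool :=
  (#|K| == r) &&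
  perm_eq [seq #|class_part K i| | i <- enum 'I_n & 0 < #|class_part K i|] sigma.

Definition is_matching (n r q : nat) (sigma : seq nat)
  (M : {set {set vertex n q}}) : bool :=
  [forall K in M, is_edge r sigma K] && trivIset M.

Definition is_max_matching (n r q : nat) (sigma : seq nat)
  (M : {set {set vertex n q}}) : Prop :=
  is_matching r sigma M /\
  forall M' : {set {set vertex n q}}, is_matching r sigma M' -> #|M'| <= #|M|.

Definition nu (n r q : nat) (sigma : seq nat) : nat :=
  \max_(M : {set {set vertex n q}} | is_matching r sigma M) #|M|.

Definition unmatched (n q : nat) (M : {set {set vertex n q}}) : nat :=
  #|~: cover M|.

From mathcomp Require Import all_boot.
From mathcomp Require Import zify.

(* Every edge meets each class in 0 or some part a_j of sigma, hence in a
   multiple of d = gcd(sigma). The classes are disjoint, so a matching also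
   covers a multiple of d vertices of every class V_i; as |V_i| = q = t mod d,
   at least t vertices of each V_i stay uncovered. *)

Lemma dvdn_gcd_seq (s : seq nat) a : a \in s -> gcd_seq s %| a.
Proof.
elim: s => [//|x s IHs]; rewrite inE => /orP[/eqP->|a_s] /=.
  exact: dvdn_gcdl.
exact: dvdn_trans (dvdn_gcdr _ _) (IHs a_s).
Qed.

Lemma leq_dvdn_subn_mod k q d : d %| k -> k <= q -> k <= q - q %% d.
Proof.
have [->|d_gt0] := posnP d; first by rewrite dvd0n => /eqP->.
case/dvdnP=> m ->; rewrite {2}(divn_eq q d) addnK -leq_divRL // => m_le.
by rewrite leq_mul2r m_le orbT.
Qed.

Section Classes.

Variables n q : nat.
Implicit Types (A K : {set vertex n q}) (M : {set {set vertex n q}}).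

Lemma card_class_part_le A i : #|class_part A i| <= q.
Proof.
rewrite -(card_in_imset (f := snd)); last first.
  by move=> [a b] [c e]; rewrite !inE /= => /andP[_ /eqP->] /andP[_ /eqP->] ->.
by apply: leq_trans (max_card _) _; rewrite card_ord.
Qed.

Lemma card_sum_class_part A : #|A| = \sum_(i < n) #|class_part A i|.
Proof.
rewrite -sum1_card (partition_big fst xpredT) //=.
by apply: eq_bigr => i _; rewrite -sum1_card big_mkcond [RHS]big_mkcond;
   apply: eq_bigr => v _; rewrite inE; case: (v \in A).
Qed.

Lemma card_class_part_cover M i : trivIset M ->
  #|class_part (cover M) i| = \sum_(K in M) #|class_part K i|.
Proof.
have card_class A : #|class_part A i| = \sum_(v in A) (v.1 == i : nat).
  by rewrite -sum1_card big_mkcond [RHS]big_mkcond;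
     apply: eq_bigr => v _; rewrite inE; case: (v \in A); case: (v.1 == i).
move=> triv_M; rewrite card_class (big_trivIset _ triv_M).
by apply: eq_bigr => K _; rewrite card_class.
Qed.

Variables (r : nat) (sigma : seq nat).

Lemma edge_class_part_dvd K i :
  is_edge r sigma K -> gcd_seq sigma %| #|class_part K i|.
Proof.
case/andP=> _ parts_sigma.
have [->|part_gt0] := posnP #|class_part K i|; first exact: dvdn0.
apply: dvdn_gcd_seq; rewrite -(perm_mem parts_sigma).
by apply/mapP; exists i; rewrite // mem_filter part_gt0 mem_enum.
Qed.

Lemma matching_class_part_dvd M i :
  is_matching r sigma M -> gcd_seq sigma %| #|class_part (cover M) i|.
Proof.
case/andP=> /forallP edges_M triv_M; rewrite card_class_part_cover //.
by apply: dvdn_sum => K K_M; apply: edge_class_part_dvd (implyP (edges_M K) K_M).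
Qed.

Lemma card_cover_matching M : is_matching r sigma M -> #|cover M| = #|M| * r.
Proof.
case/andP=> /forallP edges_M triv_M.
rewrite -sum1_card (big_trivIset _ triv_M) -sum_nat_const.
apply: eq_bigr => K K_M; rewrite sum1_card.
by case/andP: (implyP (edges_M K) K_M) => /eqP.
Qed.

Lemma card_cover_matching_le M : is_matching r sigma M ->
  #|cover M| <= n * (q - q %% gcd_seq sigma).
Proof.
move=> match_M; rewrite card_sum_class_part.
apply: (@leq_trans (\sum_(i < n) (q - q %% gcd_seq sigma))); last first.
  by rewrite sum_nat_const card_ord.
apply: leq_sum => i _; apply: leq_dvdn_subn_mod.
  exact: matching_class_part_dvd.
exact: card_class_part_le.
Qed.

End Classes.

Lemma unmatchedE n q (M : {set {set vertex n q}}) :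
  unmatched M = n * q - #|cover M|.
Proof. by rewrite /unmatched cardsCs setCK card_prod !card_ord. Qed.

Theorem lemma3p4 (n r q t : nat) (sigma : seq nat) :
  is_partition r sigma ->
  size sigma <= n ->
  r <= q ->
  2 <= gcd_seq sigma ->
  q = t %[mod gcd_seq sigma] ->
  1 <= t <= gcd_seq sigma - 1 ->
  (forall M : {set {set vertex n q}},
      is_max_matching r sigma M -> t * n <= unmatched M) /\
  nu n r q sigma * r <= n * (q - t).
Proof.
move=> _ _ _ d_ge2 q_mod /andP[_ t_lt].
have q_mod_d : q %% gcd_seq sigma = t by rewrite q_mod modn_small //; lia.
have t_le_q : t <= q by rewrite -q_mod_d leq_mod.
have cover_le (M : {set {set vertex n q}}) :
    is_matching r sigma M -> #|cover M| <= n * (q - t).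
  by move=> match_M; have := card_cover_matching_le _ _ _ _ _ match_M; rewrite q_mod_d.
split=> [M [match_M _]|].
  have := cover_le M match_M; rewrite unmatchedE mulnBr; lia.
rewrite /nu; apply: (big_ind (fun x => x * r <= n * (q - t))) => //.
  by move=> x y; rewrite maxnMl geq_max => -> ->.
by move=> M match_M; rewrite -(card_cover_matching _ _ _ _ _ match_M) cover_le.
Qed.
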